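(* For every constant $A\in\mathbb{N}$ there is a family $(\mathcal{V}_n)_{n\in\mathbb{N}}$ of VASS, each with two $\mathbb{N}$-counters and some number of $\mathbb{Z}$-counters, such that the size of $\mathcal{V}_n$ is polynomial in $n$ and $\mathcal{V}_n$ computes the set $\{(A^{2^n},\,B,\,B\cdot A^{2^n}) : B\in\mathbb{N}\}\subseteq\mathbb{Z}^3$.
   Context: A VASS with $d$ $\mathbb{N}$-counters and $k$ $\mathbb{Z}$-counters consists of a finite set $Q$ of states and a finite set $T\subseteq Q\times\mathbb{Z}^{d+k}\times Q$ of transitions. A configuration is $p(\mathbf{u})$ with $p\in Q$, $\mathbf{u}\in\mathbb{N}^d\times\mathbb{Z}^k$. A transition $(p,\mathbf{v},q)$ can be fired from $p(\mathbf{u})$, leading to $q(\mathbf{u}+\mathbf{v})$, provided the first $d$ coordinates of $\mathbf{u}+\mathbf{v}$ are nonnegative. Size is measured with numbers in unary: $|Q|+\sum_{(p,\mathbf{v},q)\in T}\|\mathbf{v}\|_1$. For $\mathbf{u}\in\mathbb{Z}^m$, write $\mathbf{u}\oplus 0^{j}$ for $\mathbf{u}$ padded with $j$ zeros. Such a VASS computes a set $S\subseteq\mathbb{Z}^m$ if there are distinguished states $q_I,q_F$ such that $S$ equals the set of $\mathbf{v}$ for which there is a run from $q_I(0^{d+k})$ to $q_F(\mathbf{v}\oplus 0^{d+k-m})$ (the vector $\mathbf{v}$ may occupy both $\mathbb{N}$- and $\mathbb{Z}$-counters). *)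

From Stdlib Require Import ZArith List Relations.
Import ListNotations.
Open Scope Z_scope.

(* A VASS with d N-counters and k Z-counters.  States are the naturals
   0 .. nstates-1; transitions are triples (p, v, q). *)
Record VASS := mkVASS {
  nstates : nat;
  trans : list (nat * list Z * nat)
}.

Definition wf_VASS (d k : nat) (V : VASS) : Prop :=
  forall p v q, In (p, v, q) (trans V) ->
    (p < nstates V)%nat /\ (q < nstates V)%nat /\ length v = (d + k)%nat.

Definition norm1 (v : list Z) : nat :=
  fold_right (fun x acc => (Z.abs_nat x + acc)%nat) 0%nat v.

(* size = |Q| + sum over transitions of ||v||_1 (unary encoding). *)
Definition vass_size (V : VASS) : nat :=
  (nstates V + fold_right (fun t acc => (norm1 (snd (fst t)) + acc)%nat) 0%nat (trans V))%nat.

Definition vadd (u v : list Z) : list Z :=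
  map (fun p => fst p + snd p) (combine u v).

Definition step (d : nat) (V : VASS) (c c' : nat * list Z) : Prop :=
  exists v, In (fst c, v, fst c') (trans V) /\
    snd c' = vadd (snd c) v /\
    forall i, (i < d)%nat -> 0 <= nth i (snd c') 0.

Definition reach (d : nat) (V : VASS) : relation (nat * list Z) :=
  clos_refl_trans _ (step d V).

Definition zeros (n : nat) : list Z := repeat 0 n.

Definition computes (d k m : nat) (V : VASS) (S : list Z -> Prop) : Prop :=
  (m <= d + k)%nat /\
  (forall v, S v -> length v = m) /\
  exists qI qF, (qI < nstates V)%nat /\ (qF < nstates V)%nat /\
    forall v, length v = m ->
      (S v <-> reach d V (qI, zeros (d + k)) (qF, v ++ zeros (d + k - m))).

Definition target_set (a : Z) : list Z -> Prop :=
  fun w => exists B : nat, w = [a; Z.of_nat B; Z.of_nat B * a].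

From Stdlib Require Import ZArith List Lia FunctionalExtensionality Relations.
Import ListNotations.

(* The VASS squares the content c of its first N-counter n times, starting from
   c = A.  At each level it performs rounds, each moving units one at a time from
   the first N-counter to the second and back, so that a round moves at most c
   units each way.  Every move and every round is also recorded on Z-counters, and
   the final zero test turns these records into linear equations between the
   numbers of rounds and of moves.  One of them says that the moves total 2c per
   round, which forces every round to be complete; the others then make the
   number of rounds of one type at the next level equal to c times the number of
   rounds of another type, which is how c^2, and at the end B c, is computed.
   Soundness is an invariant on the tally of the transitions fired so far, stating
   that no round has moved more than c units. *)

Local Open Scope Z_scope.

Lemma vadd_map (f g : nat -> Z) l : vadd (map f l) (map g l) = map (fun j => f j + g j) l.
Proof. induction l as [|a l IH]; simpl; auto. unfold vadd in *. simpl. f_equal. auto. Qed.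

Lemma norm1_map_le (f : nat -> Z) l B :
  (forall j, Z.abs (f j) <= Z.of_nat B) -> (norm1 (map f l) <= length l * B)%nat.
Proof. intros HB. induction l as [|a l IH]; simpl; [lia|]. specialize (HB a). lia. Qed.

Lemma sum_norm1_le (ts : list (nat * list Z * nat)) M :
  (forall t, In t ts -> (norm1 (snd (fst t)) <= M)%nat) ->
  (fold_right (fun t acc => (norm1 (snd (fst t)) + acc)%nat) 0%nat ts <= length ts * M)%nat.
Proof.
  induction ts as [|t ts IH]; intros H; simpl; [lia|].
  specialize (IH (fun t' Ht' => H t' (or_intror Ht'))). specialize (H t (or_introl eq_refl)). lia.
Qed.

Lemma rt_iterate {X} (R : relation X) (f : nat -> X) t :
  (forall m, (m < t)%nat -> R (f m) (f (S m))) -> clos_refl_trans X R (f 0%nat) (f t).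
Proof.
  induction t as [|t IH]; intros H; [apply rt_refl|].
  eapply rt_trans; [apply IH; auto|]. apply rt_step, H. lia.
Qed.

(** * The construction *)

(* [G k l] counts the firings of transitions of kind [k] at level [l].  At level
   [i]: [1+r] starts a round of type [r < 4], [5+r] moves a unit from x0 to x1 in
   such a round, [0] moves a unit back, [9] increments x0 on entry to the level.
   At level 0 only: [10] sets x0 := A, [11] guesses the number of rounds of level
   0, [12] increments x1 (guessing B), [13] increments the output counter, [14]
   stands in for the c_n type-2 rounds that the last level would otherwise owe.
   Kind [15] is silent. *)
Definition tally := nat -> nat -> Z.

Definition tally_zero : tally := fun _ _ => 0.
Definition tally_add (G H : tally) : tally := fun k l => G k l + H k l.
Definition tally_addn (G : tally) (k l t : nat) : tally :=
  fun k' l' => G k' l' + if (Nat.eqb k' k && Nat.eqb l' l)%bool then Z.of_nat t else 0.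
Definition tally_unit (k l : nat) : tally :=
  fun k' l' => if (Nat.eqb k' k && Nat.eqb l' l && Nat.ltb k 15)%bool then 1 else 0.
Definition tick (G : tally) (k l : nat) : tally := tally_add G (tally_unit k l).

Lemma tick_val G k l k' l' :
  tick G k l k' l' = G k' l' + if (Nat.eqb k' k && Nat.eqb l' l && Nat.ltb k 15)%bool then 1 else 0.
Proof. reflexivity. Qed.

Lemma tick_silent G l : tick G 15 l = G.
Proof.
  extensionality k'. extensionality l'. rewrite tick_val, Bool.andb_false_r. ring.
Qed.

Lemma tick_addn G k l t : (k < 15)%nat -> tick (tally_addn G k l t) k l = tally_addn G k l (S t).
Proof.
  intros Hk. extensionality k'. extensionality l'. unfold tick, tally_add, tally_unit, tally_addn.
  destruct (Nat.ltb_spec k 15); [|lia]. rewrite Bool.andb_true_r.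
  destruct (Nat.eqb k' k && Nat.eqb l' l)%bool; lia.
Qed.

Lemma tally_addn_0 G k l : tally_addn G k l 0 = G.
Proof. extensionality k'. extensionality l'. unfold tally_addn. destruct (_ && _)%bool; lia. Qed.

Section Construction.

Variables A n : nat.

Definition Az : Z := Z.of_nat A.

Definition rounds (G : tally) l := G 1%nat l + G 2%nat l + G 3%nat l + G 4%nat l.
Definition transfers (G : tally) l := G 5%nat l + G 6%nat l + G 7%nat l + G 8%nat l + G 0%nat l.
Definition rounds_due (G : tally) l :=
  match l with O => G 11%nat O | S l' => G 1%nat l' end.
Definition transfers_due (G : tally) l :=
  match l with O => 2 * Az * G 11%nat O | S l' => 2 * G 6%nat l' end.
Definition type2_due (G : tally) l :=
  match l with O => Az * G 10%nat O | S l' => G 3%nat l' + G 9%nat l end.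
Definition at_last l (x : Z) := if Nat.eqb l n then x else 0.

(* The final zero test imposes [zcounter G l m = 0].  When every round at level
   [l] moves exactly c_l units each way, these equations say: the rounds at level
   [l+1] are as many as the type-0 rounds at level [l] (m = 0), and there are c_l
   times as many type-1 rounds (m = 1); the moves at level [l+1] are twice those
   of the type-1 rounds at level [l], i.e. 2 c_(l+1) per round, and this is what
   forces the rounds to be exact (m = 2); level [l] has c_l rounds of type 2
   (m = 3), whose c_l^2 moves fix the increment c_l^2 - c_l of x0 on entry to
   level [l+1] (m = 4); the last level has B rounds, all of type 3, and their
   moves are the output (m = 5, 6). *)
Definition zcounter (G : tally) (l m : nat) : Z :=
  match m with
  | O => rounds_due G l - rounds G l
  | 1%nat => match l with O => 0 | S l' => G 5%nat l' - G 2%nat l' end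
  | 2%nat => transfers_due G l - transfers G l
  | 3%nat => type2_due G l - G 3%nat l - at_last l (G 14%nat O)
  | 4%nat => match l with O => 0 | S l' => G 7%nat l' - G 3%nat l' - G 9%nat l end
  | 5%nat => G 8%nat l - at_last l (G 13%nat O)
  | _ => G 4%nat l - at_last l (G 12%nat O)
  end.

Definition layout (x0 x1 : Z) (G : tally) (j : nat) : Z :=
  match j with
  | O => x0
  | 1%nat => x1
  | 2%nat => G 13%nat O
  | S (S (S j')) => zcounter G (j' / 7) (j' mod 7)
  end.

Definition dim : nat := 3 + 7 * (n + 2).

Definition counters (x0 x1 : Z) (G : tally) : list Z := map (layout x0 x1 G) (seq 0 dim).

Lemma layout_zcounter x0 x1 G l m : (m < 7)%nat -> layout x0 x1 G (3 + 7 * l + m) = zcounter G l m.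
Proof.
  intros Hm. replace (3 + 7 * l + m)%nat with (S (S (S (m + l * 7)))) by lia. cbn [layout].
  rewrite Nat.div_add, Nat.Div0.mod_add by lia. rewrite Nat.div_small, Nat.mod_small by lia.
  reflexivity.
Qed.

Lemma layout_add x0 x1 y0 y1 G H j :
  layout (x0 + y0) (x1 + y1) (tally_add G H) j = layout x0 x1 G j + layout y0 y1 H j.
Proof.
  destruct j as [|[|[|j]]]; try reflexivity.
  unfold layout. generalize (j / 7)%nat (j mod 7)%nat. intros l m.
  unfold zcounter, tally_add, rounds, transfers, rounds_due, transfers_due, type2_due, at_last.
  destruct m as [|[|[|[|[|[|m]]]]]]; destruct l; try destruct (Nat.eqb _ n); ring.
Qed.

Lemma layout_zero j : layout 0 0 tally_zero j = 0.
Proof.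
  destruct j as [|[|[|j]]]; try reflexivity.
  unfold layout. generalize (j / 7)%nat (j mod 7)%nat. intros l m.
  unfold zcounter, tally_zero, rounds, transfers, rounds_due, transfers_due, type2_due, at_last.
  destruct m as [|[|[|[|[|[|m]]]]]]; destruct l; try destruct (Nat.eqb _ n); ring.
Qed.

Lemma layout_unit_bound x0 x1 k l j : Z.abs x0 <= Az + 1 -> Z.abs x1 <= 1 ->
  Z.abs (layout x0 x1 (tally_unit k l) j) <= 2 * Az + 10.
Proof.
  intros H0 H1. assert (HA : 0 <= Az) by (unfold Az; lia).
  assert (HU : forall k' l', 0 <= tally_unit k l k' l' <= 1)
    by (intros; unfold tally_unit; destruct (_ && _ && _)%bool; lia).
  assert (HAU : forall k' l', 0 <= Az * tally_unit k l k' l' <= Az)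
    by (intros k' l'; specialize (HU k' l'); nia).
  destruct j as [|[|[|j]]]; cbn [layout]; [lia|lia|specialize (HU 13%nat O); lia|].
  unfold layout. generalize (j / 7)%nat (j mod 7)%nat. intros l' m.
  unfold zcounter, rounds, transfers, rounds_due, transfers_due, type2_due, at_last.
  destruct m as [|[|[|[|[|[|m]]]]]]; destruct l'; try destruct (Nat.eqb _ n);
  repeat match goal with |- context [tally_unit k l ?k' ?l'] =>
    pose proof (HU k' l'); pose proof (HAU k' l'); generalize dependent (tally_unit k l k' l'); intros
  end; lia.
Qed.

Lemma counters_length x0 x1 G : length (counters x0 x1 G) = dim.
Proof. unfold counters. rewrite length_map, length_seq. reflexivity. Qed.

Lemma counters_nth x0 x1 G j : (j < dim)%nat -> nth j (counters x0 x1 G) 0 = layout x0 x1 G j.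
Proof.
  intros Hj. unfold counters.
  rewrite nth_indep with (d' := layout x0 x1 G 0%nat) by (rewrite length_map, length_seq; auto).
  rewrite map_nth, seq_nth by auto. reflexivity.
Qed.

Lemma vadd_counters x0 x1 y0 y1 G H :
  vadd (counters x0 x1 G) (counters y0 y1 H) = counters (x0 + y0) (x1 + y1) (tally_add G H).
Proof.
  unfold counters. rewrite vadd_map. apply map_ext. intros j. symmetry. apply layout_add.
Qed.

(* [state i 0] is between rounds of level [i], [state i (1+r)] moves units out in a
   round of type [r], [state i 5] moves them back, and [state i 6] increments x0 on
   entry to level [i]; state 0 is initial and state 1 final. *)
Definition state (i r : nat) : nat := 2 + 7 * i + r.

Record edge := Edge { src : nat; kind : nat; level : nat; dx0 : Z; dx1 : Z; tgt : nat }.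

Definition level_edges (i : nat) : list edge :=
  flat_map (fun r => [Edge (state i 0) (1 + r) i 0 0 (state i (1 + r));
                      Edge (state i (1 + r)) (5 + r) i (-1) 1 (state i (1 + r));
                      Edge (state i (1 + r)) 15 0 0 0 (state i 5)]) [0; 1; 2; 3]%nat
  ++ [Edge (state i 5) 0 i 1 (-1) (state i 5); Edge (state i 5) 15 0 0 0 (state i 0)].

Definition fill_edges (i : nat) : list edge :=
  [Edge (state (i - 1) 0) 15 0 0 0 (state i 6); Edge (state i 6) 9 i 1 0 (state i 6);
   Edge (state i 6) 15 0 0 0 (state i 0)].

Definition outer_edges : list edge :=
  [Edge 0 10 0 Az 0 (state 0 0); Edge (state 0 0) 11 0 0 0 (state 0 0);
   Edge (state n 0) 15 0 0 0 1;
   Edge 1 12 0 0 1 1; Edge 1 13 0 0 0 1; Edge 1 14 0 0 0 1].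

Definition edges : list edge :=
  outer_edges ++ flat_map level_edges (seq 0 (S n)) ++ flat_map fill_edges (seq 1 n).

Definition edge_trans (e : edge) : nat * list Z * nat :=
  (src e, counters (dx0 e) (dx1 e) (tally_unit (kind e) (level e)), tgt e).

Definition pow_vass : VASS := mkVASS (9 + 7 * n) (map edge_trans edges).

Definition cfg (q : nat) (G : tally) (x0 x1 : Z) : nat * list Z := (q, counters x0 x1 G).

Lemma in_edges e : In e edges ->
  e = Edge 0 10 0 Az 0 (state 0 0) \/ e = Edge (state 0 0) 11 0 0 0 (state 0 0) \/
  e = Edge (state n 0) 15 0 0 0 1 \/
  e = Edge 1 12 0 0 1 1 \/ e = Edge 1 13 0 0 0 1 \/ e = Edge 1 14 0 0 0 1 \/
  (exists i r, (i <= n)%nat /\ (r < 4)%nat /\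
     (e = Edge (state i 0) (1 + r) i 0 0 (state i (1 + r)) \/
      e = Edge (state i (1 + r)) (5 + r) i (-1) 1 (state i (1 + r)) \/
      e = Edge (state i (1 + r)) 15 0 0 0 (state i 5))) \/
  (exists i, (i <= n)%nat /\
     (e = Edge (state i 5) 0 i 1 (-1) (state i 5) \/ e = Edge (state i 5) 15 0 0 0 (state i 0))) \/
  (exists i, (1 <= i <= n)%nat /\
     (e = Edge (state (i - 1) 0) 15 0 0 0 (state i 6) \/
      e = Edge (state i 6) 9 i 1 0 (state i 6) \/ e = Edge (state i 6) 15 0 0 0 (state i 0))).
Proof.
  unfold edges. rewrite !in_app_iff, !in_flat_map. intros [H|[[i [Hi H]]|[i [Hi H]]]].
  - simpl in H. repeat (destruct H as [<-|H]; [tauto|]); destruct H.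
  - apply in_seq in Hi. unfold level_edges in H. rewrite in_app_iff, in_flat_map in H.
    destruct H as [[r [Hr H]]|H].
    + do 6 right. left. exists i, r. simpl in Hr.
      split; [lia|]. split; [intuition lia|]. simpl in H.
      repeat (destruct H as [<-|H]; [tauto|]); destruct H.
    + do 7 right. left. exists i. split; [lia|]. simpl in H.
      repeat (destruct H as [<-|H]; [tauto|]); destruct H.
  - apply in_seq in Hi. do 8 right. exists i. split; [lia|]. simpl in H.
    repeat (destruct H as [<-|H]; [tauto|]); destruct H.
Qed.

Lemma step_edge e G x0 x1 : In e edges -> 0 <= x0 + dx0 e -> 0 <= x1 + dx1 e ->
  step 2 pow_vass (cfg (src e) G x0 x1)
    (cfg (tgt e) (tick G (kind e) (level e)) (x0 + dx0 e) (x1 + dx1 e)).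
Proof.
  intros He H0 H1. exists (counters (dx0 e) (dx1 e) (tally_unit (kind e) (level e))).
  unfold cfg. cbn [fst snd]. split; [|split].
  - apply in_map_iff. exists e. split; auto.
  - symmetry. apply vadd_counters.
  - intros i Hi. rewrite counters_nth by (unfold dim; lia). destruct i as [|[|i]]; simpl; lia.
Qed.

(** * Soundness *)

Fixpoint value (G : tally) (i : nat) : Z :=
  match i with O => Az * G 10%nat O | S i' => value G i' + G 9%nat i end.
Definition out_slack (G : tally) i r := value G i * G (1 + r)%nat i - G (5 + r)%nat i.
Definition back_slack (G : tally) i := value G i * rounds G i - G 0%nat i.
Definition level_ok (G : tally) j := (forall r, (r < 4)%nat -> 0 <= out_slack G j r) /\ 0 <= back_slack G j.
Fixpoint back_slack_sum (G : tally) (i : nat) : Z :=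
  match i with O => back_slack G O | S i' => back_slack_sum G i' + back_slack G i end.

Definition tally_below i (G : tally) := G 10%nat O = 1 /\ G 12%nat O = 0 /\
  forall l k, (i < l)%nat -> (k <= 9)%nat -> G k l = 0.

Definition inv_start (G : tally) (x0 x1 : Z) := G = tally_zero /\ x0 = 0 /\ x1 = 0.
(* Between rounds, x1 holds the units that earlier rounds did not move back; they
   are bounded by the accumulated back slack. *)
Definition inv_rest i G x0 x1 := tally_below i G /\ (forall j, (j <= i)%nat -> level_ok G j) /\
  x1 <= back_slack_sum G i /\ x0 + x1 = value G i.
Definition inv_out i r G x0 x1 := tally_below i G /\ (forall j, (j < i)%nat -> level_ok G j) /\
  (forall r', (r' < 4)%nat -> r' <> r -> 0 <= out_slack G i r') /\
  value G i <= out_slack G i r + x1 /\ value G i <= back_slack G i /\ x0 + x1 = value G i.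
Definition inv_back i G x0 x1 := tally_below i G /\ (forall j, (j < i)%nat -> level_ok G j) /\
  (forall r, (r < 4)%nat -> 0 <= out_slack G i r) /\ x1 <= back_slack G i /\ x0 + x1 = value G i.
Definition inv_fill i G x0 x1 := (1 <= i)%nat /\ tally_below i G /\
  (forall k, (k <= 8)%nat -> G k i = 0) /\ (forall j, (j < i)%nat -> level_ok G j) /\
  x1 <= back_slack_sum G (i - 1) /\ x0 + x1 = value G i.
Definition inv_final (G : tally) x0 x1 := G 10%nat O = 1 /\ (forall j, (j <= n)%nat -> level_ok G j) /\
  0 <= x1 - G 12%nat O <= back_slack_sum G n /\ x0 + x1 = value G n + G 12%nat O.

Definition inv_level i r G x0 x1 :=
  match r with
  | O => inv_rest i G x0 x1
  | 1%nat => inv_out i 0 G x0 x1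
  | 2%nat => inv_out i 1 G x0 x1
  | 3%nat => inv_out i 2 G x0 x1
  | 4%nat => inv_out i 3 G x0 x1
  | 5%nat => inv_back i G x0 x1
  | _ => inv_fill i G x0 x1
  end.

Definition inv q G x0 x1 :=
  match q with
  | O => inv_start G x0 x1
  | 1%nat => inv_final G x0 x1
  | S (S q') => (q' / 7 <= n)%nat /\ inv_level (q' / 7) (q' mod 7) G x0 x1
  end.

Lemma inv_state i r G x0 x1 : (r < 7)%nat ->
  inv (state i r) G x0 x1 <-> (i <= n)%nat /\ inv_level i r G x0 x1.
Proof.
  intros Hr. unfold state. replace (2 + 7 * i + r)%nat with (S (S (r + i * 7))) by lia.
  cbn [inv]. rewrite Nat.div_add, Nat.Div0.mod_add by lia.
  rewrite Nat.div_small, Nat.mod_small by lia. reflexivity.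
Qed.

Lemma inv_level_out i r G x0 x1 : (r < 4)%nat -> inv_level i (1 + r) G x0 x1 <-> inv_out i r G x0 x1.
Proof. intros Hr. destruct r as [|[|[|[|r]]]]; simpl; try tauto; lia. Qed.

Definition same_upto (i : nat) (G H : tally) := G 10%nat O = H 10%nat O /\
  forall j, (j <= i)%nat -> forall k, (k <= 9)%nat -> G k j = H k j.

Lemma same_upto_le i i' G H : (i' <= i)%nat -> same_upto i G H -> same_upto i' G H.
Proof. intros Hle [H1 H2]. split; auto. intros; apply H2; lia. Qed.

Lemma value_same i G H : same_upto i G H -> value G i = value H i.
Proof.
  intros [H10 Hj]. induction i; simpl. { rewrite H10; ring. }
  rewrite IHi by (intros; apply Hj; lia). rewrite (Hj (S i)) by lia. ring.
Qed.

Lemma back_slack_same i G H : same_upto i G H -> back_slack G i = back_slack H i.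
Proof.
  intros Ha. unfold back_slack, rounds. rewrite (value_same i G H Ha).
  destruct Ha as [_ Hj]. rewrite !(Hj i) by lia. ring.
Qed.

Lemma level_ok_same i j G H : (j <= i)%nat -> same_upto i G H -> level_ok G j <-> level_ok H j.
Proof.
  intros Hji Ha. apply (same_upto_le _ j) in Ha; auto.
  assert (Hd : forall r, (r < 4)%nat -> out_slack G j r = out_slack H j r).
  { intros r Hr. unfold out_slack. rewrite (value_same j G H Ha).
    destruct Ha as [_ Hj]. rewrite !(Hj j) by lia. ring. }
  unfold level_ok. rewrite (back_slack_same _ _ _ Ha).
  split; intros [H1 H2]; split; auto; intros r Hr; [rewrite <- Hd|rewrite Hd]; auto.
Qed.

Lemma back_slack_sum_same i G H : same_upto i G H -> back_slack_sum G i = back_slack_sum H i.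
Proof.
  intros Ha. induction i; simpl. { apply back_slack_same; auto. }
  rewrite IHi by (eapply same_upto_le; [|eauto]; lia). rewrite (back_slack_same _ _ _ Ha). ring.
Qed.

Lemma back_slack_sum_nonneg G i : (forall j, (j <= i)%nat -> level_ok G j) -> 0 <= back_slack_sum G i.
Proof.
  induction i; intros Hd; simpl.
  - apply (Hd O); lia.
  - assert (0 <= back_slack G (S i)) by (apply (Hd (S i)); lia).
    assert (0 <= back_slack_sum G i) by (apply IHi; intros; apply Hd; lia). lia.
Qed.

Lemma same_upto_tick_above i G k l : (i < l)%nat -> same_upto i (tick G k l) G.
Proof.
  intros Hil. split.
  - rewrite tick_val. destruct (Nat.eqb_spec O l); [lia|].
    rewrite ?Bool.andb_false_r, ?Bool.andb_false_l; ring.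
  - intros j Hj k' Hk. rewrite tick_val. destruct (Nat.eqb_spec j l); [lia|].
    rewrite ?Bool.andb_false_r, ?Bool.andb_false_l; ring.
Qed.

Lemma same_upto_tick_outer i G k l : (10 < k)%nat -> same_upto i (tick G k l) G.
Proof.
  intros Hk. split.
  - rewrite tick_val. destruct (Nat.eqb_spec 10 k); [lia|]. simpl; ring.
  - intros j Hj k' Hk'. rewrite tick_val. destruct (Nat.eqb_spec k' k); [lia|]. simpl; ring.
Qed.

Lemma tally_below_tick i G k l : (l <= i)%nat -> k <> 10%nat -> k <> 12%nat ->
  tally_below i G -> tally_below i (tick G k l).
Proof.
  intros Hl H10 H12 [P1 [P2 P3]]. unfold tally_below. rewrite !tick_val.
  destruct (Nat.eqb_spec 10 k); [lia|]. destruct (Nat.eqb_spec 12 k); [lia|]. simpl.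
  split; [lia|]. split; [lia|]. intros l' k' Hl' Hk'. rewrite tick_val, P3 by lia.
  destruct (Nat.eqb_spec l' l); [lia|]. rewrite ?Bool.andb_false_r, ?Bool.andb_false_l; ring.
Qed.

Lemma value_tick_round G k l i : (k <= 8)%nat -> value (tick G k l) i = value G i.
Proof.
  intros Hk. induction i; simpl; rewrite !tick_val.
  - destruct (Nat.eqb_spec 10 k); [lia|]. simpl; ring.
  - rewrite IHi. destruct (Nat.eqb_spec 9 k); [lia|]. simpl; ring.
Qed.

Lemma out_slack_tick G k i r : (k <= 8)%nat -> (r < 4)%nat ->
  out_slack (tick G k i) i r = out_slack G i r + value G i * (if Nat.eqb (1 + r) k then 1 else 0)
                               - (if Nat.eqb (5 + r) k then 1 else 0).
Proof.
  intros Hk Hr. unfold out_slack. rewrite value_tick_round by auto. rewrite !tick_val.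
  rewrite Nat.eqb_refl. destruct (Nat.ltb_spec k 15); [|lia].
  rewrite !Bool.andb_true_r. ring.
Qed.

Lemma back_slack_tick G k i : (k <= 8)%nat ->
  back_slack (tick G k i) i = back_slack G i + value G i * (if (Nat.leb 1 k && Nat.leb k 4)%bool then 1 else 0)
                              - (if Nat.eqb 0 k then 1 else 0).
Proof.
  intros Hk. unfold back_slack, rounds. rewrite value_tick_round by auto. rewrite !tick_val.
  rewrite Nat.eqb_refl. destruct (Nat.ltb_spec k 15); [|lia].
  rewrite !Bool.andb_true_r. destruct k as [|[|[|[|[|k]]]]]; simpl; ring.
Qed.

Lemma level_ok_tick_above j G k l : (j < l)%nat -> level_ok G j -> level_ok (tick G k l) j.
Proof. intros Hl. rewrite (level_ok_same j j (tick G k l) G) by (auto; apply same_upto_tick_above; auto). auto. Qed.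

Lemma inv_init_edge G : inv_start G 0 0 -> inv_rest 0 (tick G 10 0) Az 0.
Proof.
  intros [-> _].
  assert (HG : forall k l, tick tally_zero 10 0 k l = if (Nat.eqb k 10 && Nat.eqb l 0)%bool then 1 else 0).
  { intros k l. rewrite tick_val. cbn [Nat.ltb Nat.leb]. rewrite Bool.andb_true_r.
    unfold tally_zero. destruct (Nat.eqb k 10 && Nat.eqb l 0)%bool; ring. }
  assert (Hok : level_ok (tick tally_zero 10 0) 0).
  { unfold level_ok, out_slack, back_slack, rounds. simpl. rewrite !HG. simpl.
    split; [intros r Hr|lia]. destruct r as [|[|[|[|r]]]]; simpl; rewrite ?HG; simpl; lia. }
  unfold inv_rest, tally_below. rewrite !HG. simpl. split; [split; [reflexivity|split; [reflexivity|]]|].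
  { intros l k Hl Hk. rewrite HG. destruct (Nat.eqb_spec l 0); [lia|].
    rewrite Bool.andb_false_r; reflexivity. }
  split; [intros j Hj; replace j with O by lia; exact Hok|].
  unfold back_slack, rounds. simpl. rewrite !HG. simpl. lia.
Qed.

Lemma inv_guess_rounds_edge G x0 x1 : inv_rest 0 G x0 x1 -> inv_rest 0 (tick G 11 0) x0 x1.
Proof.
  intros [HP [Hd [HT Hc]]]. pose proof (same_upto_tick_outer 0 G 11 0 ltac:(lia)) as Ha.
  split; [apply tally_below_tick; auto|].
  split; [intros j Hj; rewrite (level_ok_same 0 j _ G) by auto; auto|].
  rewrite (back_slack_sum_same 0 _ G Ha), (value_same 0 _ G Ha). lia.
Qed.

Lemma inv_finish_edge G x0 x1 : 0 <= x1 -> inv_rest n G x0 x1 -> inv_final G x0 x1.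
Proof. intros Hx1 [[P1 [P2 _]] [Hd [HT Hc]]]. unfold inv_final. rewrite P2. split; auto. split; auto. lia. Qed.

Lemma inv_final_edge G k x0 x1 : (12 <= k <= 14)%nat -> inv_final G x0 x1 ->
  inv_final (tick G k 0) x0 (x1 + if Nat.eqb k 12 then 1 else 0).
Proof.
  intros Hk [H10 [Hd [HT Hc]]]. pose proof (same_upto_tick_outer n G k 0 ltac:(lia)) as Ha.
  unfold inv_final. rewrite (back_slack_sum_same n _ G Ha), (value_same n _ G Ha), !tick_val.
  destruct (Nat.ltb_spec k 15); [|lia]. destruct (Nat.eqb_spec 10 k); [lia|].
  split; [simpl; lia|]. split; [intros j Hj; rewrite (level_ok_same n j _ G) by auto; auto|].
  destruct (Nat.eqb_spec k 12) as [->|]; [simpl; lia|].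
  destruct (Nat.eqb_spec 12 k); [lia|]. simpl. lia.
Qed.

Lemma inv_round_start i r G x0 x1 : (r < 4)%nat -> 0 <= x1 ->
  inv_rest i G x0 x1 -> inv_out i r (tick G (1 + r) i) x0 x1.
Proof.
  intros Hr Hx1 [HP [Hd [HT Hc]]]. destruct (Hd i (le_n i)) as [Hdl HE]. unfold inv_out.
  rewrite value_tick_round by lia. rewrite (out_slack_tick G (1 + r) i r), back_slack_tick by lia.
  rewrite Nat.eqb_refl. destruct (Nat.eqb_spec (5 + r) (1 + r)); [lia|].
  replace (Nat.leb 1 (1 + r) && Nat.leb (1 + r) 4)%bool with true
    by (symmetry; apply andb_true_intro; split; apply Nat.leb_le; lia).
  destruct (Nat.eqb_spec 0 (1 + r)); [lia|].
  split; [apply tally_below_tick; auto; lia|].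
  split; [intros j Hj; apply level_ok_tick_above, Hd; lia|].
  split; [|specialize (Hdl r Hr); lia].
  intros r' Hr' Hne. rewrite out_slack_tick by lia.
  destruct (Nat.eqb_spec (1 + r') (1 + r)); [lia|]. destruct (Nat.eqb_spec (5 + r') (1 + r)); [lia|].
  specialize (Hdl r' Hr'). lia.
Qed.

Lemma inv_out_move i r G x0 x1 : (r < 4)%nat ->
  inv_out i r G x0 x1 -> inv_out i r (tick G (5 + r) i) (x0 - 1) (x1 + 1).
Proof.
  intros Hr [HP [Hd [Hr' [Hdl [HE Hc]]]]]. unfold inv_out.
  rewrite value_tick_round by lia. rewrite (out_slack_tick G (5 + r) i r), back_slack_tick by lia.
  rewrite Nat.eqb_refl. destruct (Nat.eqb_spec (1 + r) (5 + r)); [lia|].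
  replace (Nat.leb 1 (5 + r) && Nat.leb (5 + r) 4)%bool with false
    by (symmetry; apply Bool.andb_false_intro2; apply Nat.leb_gt; lia).
  destruct (Nat.eqb_spec 0 (5 + r)); [lia|].
  split; [apply tally_below_tick; auto; lia|].
  split; [intros j Hj; apply level_ok_tick_above, Hd; lia|].
  split; [|lia].
  intros r' Hr'' Hne. rewrite out_slack_tick by lia.
  destruct (Nat.eqb_spec (1 + r') (5 + r)); [lia|]. destruct (Nat.eqb_spec (5 + r') (5 + r)); [lia|].
  specialize (Hr' r' Hr'' Hne). lia.
Qed.

Lemma inv_out_end i r G x0 x1 : 0 <= x0 -> inv_out i r G x0 x1 -> inv_back i G x0 x1.
Proof.
  intros Hx0 [HP [Hd [Hr' [Hdl [HE Hc]]]]]. split; auto. split; auto. split; [|lia].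
  intros r' Hr. destruct (Nat.eq_dec r' r); [subst; lia|]. auto.
Qed.

Lemma inv_back_move i G x0 x1 : inv_back i G x0 x1 -> inv_back i (tick G 0 i) (x0 + 1) (x1 - 1).
Proof.
  intros [HP [Hd [Hdl [HE Hc]]]]. unfold inv_back.
  rewrite value_tick_round by lia. rewrite back_slack_tick by lia. simpl.
  split; [apply tally_below_tick; auto; lia|].
  split; [intros j Hj; apply level_ok_tick_above, Hd; lia|].
  split; [|lia].
  intros r Hr. rewrite out_slack_tick by lia.
  destruct (Nat.eqb_spec (1 + r) 0); [lia|]. destruct (Nat.eqb_spec (5 + r) 0); [lia|].
  specialize (Hdl r Hr). lia.
Qed.

Lemma inv_back_end i G x0 x1 : 0 <= x1 -> inv_back i G x0 x1 -> inv_rest i G x0 x1.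
Proof.
  intros Hx1 [HP [Hd [Hdl [HE Hc]]]].
  assert (Hdi : level_ok G i) by (split; auto; lia).
  split; auto. split; [intros j Hj; destruct (Nat.eq_dec j i); [subst; auto|apply Hd; lia]|].
  split; [|lia].
  destruct i as [|i']; simpl; [lia|].
  assert (0 <= back_slack_sum G i') by (apply back_slack_sum_nonneg; intros; apply Hd; lia). lia.
Qed.

Lemma inv_fill_start i G x0 x1 : inv_rest i G x0 x1 -> inv_fill (S i) G x0 x1.
Proof.
  intros [[P1 [P2 P3]] [Hd [HT Hc]]]. unfold inv_fill. rewrite Nat.sub_succ, Nat.sub_0_r.
  split; [lia|]. split; [split; auto; split; auto; intros; apply P3; lia|].
  split; [intros; apply P3; lia|].
  split; [intros; apply Hd; lia|].
  split; [lia|]. simpl. rewrite (P3 (S i) 9%nat) by lia. lia.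
Qed.

Lemma inv_fill_move i G x0 x1 : inv_fill i G x0 x1 -> inv_fill i (tick G 9 i) (x0 + 1) x1.
Proof.
  intros [Hi1 [HP [HZ [Hd [HT Hc]]]]]. unfold inv_fill.
  destruct i as [|i']; [lia|]. rewrite Nat.sub_succ, Nat.sub_0_r in *.
  pose proof (same_upto_tick_above i' G 9 (S i') ltac:(lia)) as Ha.
  split; [lia|]. split; [apply tally_below_tick; auto; lia|].
  split; [intros k Hk; rewrite tick_val, HZ by auto; destruct (Nat.eqb_spec k 9); [lia|]; simpl; ring|].
  split; [intros j Hj; apply level_ok_tick_above, Hd; lia|].
  split; [rewrite (back_slack_sum_same i' _ G Ha); lia|].
  simpl. rewrite (value_same i' _ G Ha), tick_val, !Nat.eqb_refl. simpl. simpl in Hc. lia.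
Qed.

Lemma inv_fill_end i G x0 x1 : inv_fill i G x0 x1 -> inv_rest i G x0 x1.
Proof.
  intros [Hi1 [HP [HZ [Hd [HT Hc]]]]].
  assert (Hdi : level_ok G i).
  { unfold level_ok, out_slack, back_slack, rounds. rewrite !HZ by lia.
    split; [intros r Hr; rewrite !HZ by lia; lia|lia]. }
  split; auto. split; [intros j Hj; destruct (Nat.eq_dec j i); [subst; auto|apply Hd; lia]|].
  split; [|lia].
  destruct i as [|i']; [lia|]. simpl. rewrite Nat.sub_succ, Nat.sub_0_r in HT.
  unfold back_slack, rounds. rewrite !HZ by lia. lia.
Qed.

Lemma inv_step e G x0 x1 : In e edges -> 0 <= x0 -> 0 <= x1 -> 0 <= x0 + dx0 e -> 0 <= x1 + dx1 e ->
  inv (src e) G x0 x1 -> inv (tgt e) (tick G (kind e) (level e)) (x0 + dx0 e) (x1 + dx1 e).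
Proof.
  intros He Hx0 Hx1 Hy0 Hy1 HI. apply in_edges in He.
  destruct He as [E|[E|[E|[E|[E|[E|[[i [r [Hi [Hr [E|[E|E]]]]]]|[[i [Hi [E|E]]]|[i [Hi [E|[E|E]]]]]]]]]]]];
    subst e; cbn [src tgt kind level dx0 dx1] in *;
    repeat match goal with
    | H : inv (state _ _) _ _ _ |- _ => rewrite inv_state in H by lia; destruct H as [_ H]
    | |- inv (state _ _) _ _ _ => rewrite inv_state by lia; split; [lia|]
    end; cbn [inv inv_level] in *; rewrite ?tick_silent.
  - destruct HI as [HG [-> ->]]. exact (inv_init_edge G (conj HG (conj eq_refl eq_refl))).
  - rewrite !Z.add_0_r. apply inv_guess_rounds_edge, HI.
  - rewrite !Z.add_0_r. apply inv_finish_edge; auto.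
  - rewrite Z.add_0_r. exact (inv_final_edge G 12 x0 x1 ltac:(lia) HI).
  - rewrite Z.add_0_r. exact (inv_final_edge G 13 x0 x1 ltac:(lia) HI).
  - rewrite Z.add_0_r. exact (inv_final_edge G 14 x0 x1 ltac:(lia) HI).
  - rewrite inv_level_out by lia. rewrite !Z.add_0_r. apply inv_round_start; auto.
  - rewrite inv_level_out in HI |- * by lia. exact (inv_out_move i r G x0 x1 Hr HI).
  - rewrite inv_level_out in HI by lia. rewrite !Z.add_0_r. apply (inv_out_end i r); auto.
  - exact (inv_back_move i G x0 x1 HI).
  - rewrite !Z.add_0_r. apply inv_back_end; auto.
  - destruct i as [|i]; [lia|]. rewrite Nat.sub_succ, Nat.sub_0_r in HI.
    rewrite !Z.add_0_r. apply inv_fill_start, HI.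
  - rewrite (Z.add_0_r x1). apply inv_fill_move, HI.
  - rewrite !Z.add_0_r. apply inv_fill_end, HI.
Qed.

Definition good_cfg (c : nat * list Z) : Prop :=
  exists G x0 x1, c = cfg (fst c) G x0 x1 /\ 0 <= x0 /\ 0 <= x1 /\ inv (fst c) G x0 x1.

Lemma good_cfg_step c c' : good_cfg c -> step 2 pow_vass c c' -> good_cfg c'.
Proof.
  destruct c as [q u], c' as [q' u']. cbn [fst snd].
  intros [G [x0 [x1 [Hc [Hx0 [Hx1 HI]]]]]] [v [Hin [Hu Hnn]]]. cbn [fst snd] in *.
  unfold cfg in Hc. injection Hc as ->. apply in_map_iff in Hin. destruct Hin as [e [He Hin]].
  unfold edge_trans in He. injection He as Eq Ev Eq'. subst q q' v. rewrite vadd_counters in Hu. subst u'.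
  assert (Hy0 := Hnn 0%nat ltac:(lia)). assert (Hy1 := Hnn 1%nat ltac:(lia)).
  rewrite counters_nth in Hy0, Hy1 by (unfold dim; lia). cbn [layout] in Hy0, Hy1.
  exists (tick G (kind e) (level e)), (x0 + dx0 e), (x1 + dx1 e). cbn [fst].
  split; [reflexivity|]. split; [lia|]. split; [lia|]. apply inv_step; auto.
Qed.

Lemma good_cfg_reach c c' : reach 2 pow_vass c c' -> good_cfg c -> good_cfg c'.
Proof. intros H. induction H; eauto using good_cfg_step. Qed.

Lemma counters_zero : counters 0 0 tally_zero = zeros dim.
Proof.
  unfold counters, zeros. rewrite (map_ext _ (fun _ => 0)) by apply layout_zero.
  rewrite map_const, length_seq. reflexivity.
Qed.

Lemma good_cfg_init : good_cfg (0%nat, zeros dim).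
Proof.
  exists tally_zero, 0, 0. rewrite <- counters_zero. repeat split; lia.
Qed.

Lemma slacks_zero G l : level_ok G l -> transfers G l = 2 * value G l * rounds G l ->
  (forall r, (r < 4)%nat -> out_slack G l r = 0) /\ back_slack G l = 0.
Proof.
  intros [Hd HE] HS.
  assert (Hsum : 2 * value G l * rounds G l - transfers G l =
    out_slack G l 0 + out_slack G l 1 + out_slack G l 2 + out_slack G l 3 + back_slack G l)
    by (unfold out_slack, back_slack, rounds, transfers; cbn [Nat.add]; ring).
  pose proof (Hd 0%nat ltac:(lia)). pose proof (Hd 1%nat ltac:(lia)).
  pose proof (Hd 2%nat ltac:(lia)). pose proof (Hd 3%nat ltac:(lia)).
  split; [|lia]. intros r Hr. destruct r as [|[|[|[|r]]]]; lia.
Qed.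

Lemma levels_exact G : G 10%nat O = 1 -> (forall j, (j <= n)%nat -> level_ok G j) ->
  (forall l m, (l <= n)%nat -> (m < 7)%nat -> zcounter G l m = 0) ->
  forall l, (l <= n)%nat -> value G l = Z.of_nat (A ^ (2 ^ l)) /\
    (forall r, (r < 4)%nat -> out_slack G l r = 0) /\ back_slack G l = 0 /\
    ((l < n)%nat -> G 3%nat l = value G l).
Proof.
  intros H10 Hd Hz. induction l as [|l IH]; intros Hl.
  - pose proof (Hz 0%nat 0%nat Hl ltac:(lia)) as Z0. pose proof (Hz 0%nat 2%nat Hl ltac:(lia)) as Z2.
    pose proof (Hz 0%nat 3%nat Hl ltac:(lia)) as Z3.
    cbn [zcounter rounds_due transfers_due type2_due] in Z0, Z2, Z3.
    assert (Hv : value G 0 = Az) by (simpl; rewrite H10; ring).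
    assert (HS : transfers G 0 = 2 * value G 0 * rounds G 0) by (rewrite Hv; rewrite H10 in *; nia).
    destruct (slacks_zero G 0 (Hd 0%nat Hl) HS) as [Hout Hback].
    split; [rewrite Hv; unfold Az; simpl; rewrite Nat.mul_1_r; reflexivity|].
    split; auto. split; auto. intros Hn. unfold at_last in Z3.
    destruct (Nat.eqb_spec 0 n); [lia|]. rewrite Hv. rewrite H10 in Z3. lia.
  - destruct IH as [IHv [IHout [_ IH3]]]; [lia|]. specialize (IH3 ltac:(lia)).
    pose proof (Hz (S l) 0%nat Hl ltac:(lia)) as Z0. pose proof (Hz (S l) 1%nat Hl ltac:(lia)) as Z1.
    pose proof (Hz (S l) 2%nat Hl ltac:(lia)) as Z2. pose proof (Hz (S l) 3%nat Hl ltac:(lia)) as Z3.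
    pose proof (Hz (S l) 4%nat Hl ltac:(lia)) as Z4.
    cbn [zcounter rounds_due transfers_due type2_due] in Z0, Z1, Z2, Z3, Z4.
    pose proof (IHout 0%nat ltac:(lia)) as D0. pose proof (IHout 1%nat ltac:(lia)) as D1.
    pose proof (IHout 2%nat ltac:(lia)) as D2.
    unfold out_slack in D0, D1, D2. cbn [Nat.add] in D0, D1, D2.
    set (c := value G l) in *.
    assert (H9 : G 9%nat (S l) = c * c - c) by (rewrite IH3 in *; nia).
    assert (Hv : value G (S l) = c * c) by (simpl; fold c; lia).
    assert (HS : transfers G (S l) = 2 * value G (S l) * rounds G (S l)).
    { rewrite Hv. assert (G 6%nat l = c * G 2%nat l) by lia.
      assert (G 5%nat l = c * G 1%nat l) by lia. unfold transfers, rounds in *. nia. }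
    destruct (slacks_zero G (S l) (Hd (S l) Hl) HS) as [Hout Hback].
    split.
    { rewrite Hv, IHv, Nat.pow_succ_r', Nat.mul_comm, Nat.pow_mul_r, Nat.pow_2_r, Nat2Z.inj_mul.
      reflexivity. }
    split; auto. split; auto. intros Hn. unfold at_last in Z3.
    destruct (Nat.eqb_spec (S l) n); [lia|]. rewrite Hv. lia.
Qed.

Lemma good_cfg_final v : length v = 3%nat -> good_cfg (1%nat, v ++ zeros (dim - 3)) ->
  target_set (Z.of_nat (A ^ (2 ^ n))) v.
Proof.
  intros Hv [G [x0 [x1 [Hc [Hx0 [Hx1 HI]]]]]]. cbn [fst] in *. unfold cfg in Hc.
  apply (f_equal snd) in Hc. cbn [snd] in Hc. destruct HI as [H10 [Hd [HT Hval]]].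
  assert (Hnth : forall j, (j < dim)%nat -> nth j (v ++ zeros (dim - 3)) 0 = layout x0 x1 G j)
    by (intros j Hj; rewrite Hc; apply counters_nth; auto).
  destruct v as [|v0 [|v1 [|v2 [|? ?]]]]; simpl in Hv; try lia.
  assert (Hz : forall l m, (l <= n)%nat -> (m < 7)%nat -> zcounter G l m = 0).
  { intros l m Hl Hm. rewrite <- (layout_zcounter x0 x1) by auto.
    rewrite <- Hnth by (unfold dim; lia). replace (3 + 7 * l + m)%nat with (S (S (S (7 * l + m)))) by lia.
    apply nth_repeat. }
  pose proof (Hnth 0%nat ltac:(unfold dim; lia)) as E0. pose proof (Hnth 1%nat ltac:(unfold dim; lia)) as E1.
  pose proof (Hnth 2%nat ltac:(unfold dim; lia)) as E2. cbn in E0, E1, E2. subst v0 v1 v2.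
  pose proof (levels_exact G H10 Hd Hz n (le_n n)) as [Hvn [Houtn [_ _]]].
  assert (HT0 : forall i, (i <= n)%nat -> back_slack_sum G i = 0).
  { induction i; intros Hi; simpl.
    - apply (levels_exact G H10 Hd Hz 0%nat ltac:(lia)).
    - rewrite IHi by lia. destruct (levels_exact G H10 Hd Hz (S i) Hi) as [_ [_ [E _]]]. lia. }
  rewrite HT0 in HT by auto.
  pose proof (Hz n 5%nat (le_n n) ltac:(lia)) as Z5. pose proof (Hz n 6%nat (le_n n) ltac:(lia)) as Z6.
  cbn [zcounter] in Z5, Z6. unfold at_last in Z5, Z6. rewrite Nat.eqb_refl in Z5, Z6.
  pose proof (Houtn 3%nat ltac:(lia)) as D3. unfold out_slack in D3. cbn [Nat.add] in D3.
  exists (Z.to_nat x1). rewrite Z2Nat.id by lia. rewrite <- Hvn.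
  f_equal; [lia|]. f_equal. f_equal. nia.
Qed.

(** * The intended run *)

Lemma reach_fire e G G' x0 x1 y0 y1 : In e edges -> (kind e < 15)%nat ->
  y0 = x0 + dx0 e -> y1 = x1 + dx1 e -> 0 <= y0 -> 0 <= y1 -> G' = tally_addn G (kind e) (level e) 1 ->
  reach 2 pow_vass (cfg (src e) G x0 x1) (cfg (tgt e) G' y0 y1).
Proof.
  intros He Hk -> -> Hy0 Hy1 ->. apply rt_step.
  rewrite <- tick_addn, tally_addn_0 by auto. apply step_edge; auto.
Qed.

Lemma reach_silent e G x0 x1 : In e edges -> kind e = 15%nat -> dx0 e = 0 -> dx1 e = 0 ->
  0 <= x0 -> 0 <= x1 -> reach 2 pow_vass (cfg (src e) G x0 x1) (cfg (tgt e) G x0 x1).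
Proof.
  intros He Hk H0 H1 Hx0 Hx1. apply rt_step.
  pose proof (step_edge e G x0 x1 He) as Hs. rewrite Hk, tick_silent, H0, H1, !Z.add_0_r in Hs. apply Hs; lia.
Qed.

Lemma reach_loop e G G' x0 x1 y0 y1 t : In e edges -> src e = tgt e -> (kind e < 15)%nat ->
  0 <= x0 -> 0 <= x1 -> y0 = x0 + Z.of_nat t * dx0 e -> y1 = x1 + Z.of_nat t * dx1 e ->
  0 <= y0 -> 0 <= y1 -> G' = tally_addn G (kind e) (level e) t ->
  reach 2 pow_vass (cfg (src e) G x0 x1) (cfg (src e) G' y0 y1).
Proof.
  intros He Hloop Hk Hx0 Hx1 -> -> Hy0 Hy1 ->.
  replace (cfg (src e) G x0 x1) with (cfg (src e) (tally_addn G (kind e) (level e) 0)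
    (x0 + Z.of_nat 0 * dx0 e) (x1 + Z.of_nat 0 * dx1 e)) by (rewrite tally_addn_0; f_equal; lia).
  apply (rt_iterate _ (fun m => cfg (src e) (tally_addn G (kind e) (level e) m)
                                  (x0 + Z.of_nat m * dx0 e) (x1 + Z.of_nat m * dx1 e)) t).
  intros m Hm. rewrite <- tick_addn by auto.
  replace (x0 + Z.of_nat (S m) * dx0 e) with (x0 + Z.of_nat m * dx0 e + dx0 e) by lia.
  replace (x1 + Z.of_nat (S m) * dx1 e) with (x1 + Z.of_nat m * dx1 e + dx1 e) by lia.
  rewrite Hloop at 2. apply step_edge; auto.
  - destruct (Z_le_gt_dec 0 (dx0 e)); nia.
  - destruct (Z_le_gt_dec 0 (dx1 e)); nia.
Qed.

Lemma level_edges_in i e : (i <= n)%nat -> In e (level_edges i) -> In e edges.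
Proof.
  intros Hi He. unfold edges. rewrite !in_app_iff, !in_flat_map. right. left.
  exists i. split; auto. apply in_seq. lia.
Qed.

Lemma fill_edges_in i e : (1 <= i <= n)%nat -> In e (fill_edges i) -> In e edges.
Proof.
  intros Hi He. unfold edges. rewrite !in_app_iff, !in_flat_map. right. right.
  exists i. split; auto. apply in_seq. lia.
Qed.

Lemma outer_edges_in e : In e outer_edges -> In e edges.
Proof. intros He. unfold edges. rewrite in_app_iff. auto. Qed.

Lemma round_edges_in i r : (r < 4)%nat ->
  In (Edge (state i 0) (1 + r) i 0 0 (state i (1 + r))) (level_edges i) /\
  In (Edge (state i (1 + r)) (5 + r) i (-1) 1 (state i (1 + r))) (level_edges i) /\
  In (Edge (state i (1 + r)) 15 0 0 0 (state i 5)) (level_edges i) /\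
  In (Edge (state i 5) 0 i 1 (-1) (state i 5)) (level_edges i) /\
  In (Edge (state i 5) 15 0 0 0 (state i 0)) (level_edges i).
Proof.
  intros Hr. destruct r as [|[|[|[|r]]]]; try lia; unfold level_edges; simpl;
  repeat split; repeat (first [left; reflexivity | right]).
Qed.

Definition add_rounds (G : tally) (i r c m : nat) : tally :=
  tally_addn (tally_addn (tally_addn G (1 + r) i m) (5 + r) i (m * c)) 0 i (m * c).

Lemma add_rounds_S G i r c m : add_rounds G i r c (S m) = add_rounds (add_rounds G i r c m) i r c 1.
Proof.
  extensionality k'. extensionality l'. unfold add_rounds, tally_addn.
  destruct (Nat.eqb k' (1 + r) && Nat.eqb l' i)%bool;
  destruct (Nat.eqb k' (5 + r) && Nat.eqb l' i)%bool;
  destruct (Nat.eqb k' 0 && Nat.eqb l' i)%bool; lia.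
Qed.

Lemma reach_round G i r c : (i <= n)%nat -> (r < 4)%nat ->
  reach 2 pow_vass (cfg (state i 0) G (Z.of_nat c) 0)
    (cfg (state i 0) (add_rounds G i r c 1) (Z.of_nat c) 0).
Proof.
  intros Hi Hr. destruct (round_edges_in i r Hr) as [I1 [I2 [I3 [I4 I5]]]].
  set (G1 := tally_addn G (1 + r) i 1). set (G2 := tally_addn G1 (5 + r) i c).
  unfold add_rounds. rewrite Nat.mul_1_l. fold G1 G2.
  apply rt_trans with (cfg (state i (1 + r)) G1 (Z.of_nat c) 0).
  { apply (reach_fire (Edge (state i 0) (1 + r) i 0 0 (state i (1 + r))));
      [eapply level_edges_in; eauto|cbn; lia..|reflexivity]. }
  apply rt_trans with (cfg (state i (1 + r)) G2 0 (Z.of_nat c)).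
  { apply (reach_loop (Edge (state i (1 + r)) (5 + r) i (-1) 1 (state i (1 + r))) _ _ _ _ _ _ c);
      [eapply level_edges_in; eauto|reflexivity|cbn; lia..|reflexivity]. }
  apply rt_trans with (cfg (state i 5) G2 0 (Z.of_nat c)).
  { apply (reach_silent (Edge (state i (1 + r)) 15 0 0 0 (state i 5)));
      [eapply level_edges_in; eauto|reflexivity..|lia|lia]. }
  apply rt_trans with (cfg (state i 5) (tally_addn G2 0 i c) (Z.of_nat c) 0).
  { apply (reach_loop (Edge (state i 5) 0 i 1 (-1) (state i 5)) _ _ _ _ _ _ c);
      [eapply level_edges_in; eauto|reflexivity|cbn; lia..|reflexivity]. }
  apply (reach_silent (Edge (state i 5) 15 0 0 0 (state i 0)));
    [eapply level_edges_in; eauto|reflexivity..|lia|lia].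
Qed.

Lemma reach_rounds G i r c m : (i <= n)%nat -> (r < 4)%nat ->
  reach 2 pow_vass (cfg (state i 0) G (Z.of_nat c) 0)
    (cfg (state i 0) (add_rounds G i r c m) (Z.of_nat c) 0).
Proof.
  intros Hi Hr. induction m as [|m IH].
  - unfold add_rounds. rewrite !tally_addn_0. apply rt_refl.
  - eapply rt_trans; [apply IH|]. rewrite add_rounds_S. apply reach_round; auto.
Qed.

Definition level_val (l : nat) : nat := A ^ (2 ^ l).

Lemma level_val_0 : level_val 0 = A.
Proof. unfold level_val. simpl. lia. Qed.

Lemma level_val_S l : level_val (S l) = (level_val l * level_val l)%nat.
Proof. unfold level_val. rewrite Nat.pow_succ_r', Nat.mul_comm, Nat.pow_mul_r, Nat.pow_2_r. reflexivity. Qed.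

Lemma level_val_le_S l : (level_val l <= level_val (S l))%nat.
Proof. rewrite level_val_S. destruct (level_val l); lia. Qed.

Section Run.

Variable B : nat.

(* Indexed by the distance [d] to the last level, whose B rounds determine all the
   others. *)
Fixpoint rounds_from_top (d : nat) : nat :=
  match d with
  | O => B
  | S d' => let c := level_val (n - S d') in rounds_from_top d' + c * rounds_from_top d' + c
  end.

Definition nrounds (l : nat) : nat := rounds_from_top (n - l).

Definition typed_rounds (r l : nat) : nat :=
  if Nat.ltb l n then
    match r with O => nrounds (S l) | 1%nat => level_val l * nrounds (S l) | 2%nat => level_val l | _ => O end
  else if Nat.eqb l n then (if Nat.eqb r 3 then B else O) else O.

Definition fill_amount (l : nat) : nat :=
  if (Nat.leb 1 l && Nat.leb l n)%bool then level_val l - level_val (l - 1) else O.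

Arguments level_val : simpl never.
Arguments nrounds : simpl never.
Arguments typed_rounds : simpl never.
Arguments fill_amount : simpl never.

Definition run_tally (k l : nat) : Z :=
  match k with
  | O => if Nat.leb l n then Z.of_nat (level_val l) * Z.of_nat (nrounds l) else 0
  | 1%nat | 2%nat | 3%nat | 4%nat => Z.of_nat (typed_rounds (k - 1) l)
  | 5%nat | 6%nat | 7%nat | 8%nat => Z.of_nat (level_val l) * Z.of_nat (typed_rounds (k - 5) l)
  | 9%nat => Z.of_nat (fill_amount l)
  | 10%nat => if Nat.eqb l 0 then 1 else 0
  | 11%nat => if Nat.eqb l 0 then Z.of_nat (nrounds 0) else 0
  | 12%nat => if Nat.eqb l 0 then Z.of_nat B else 0
  | 13%nat => if Nat.eqb l 0 then Z.of_nat B * Z.of_nat (level_val n) else 0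
  | 14%nat => if Nat.eqb l 0 then Z.of_nat (level_val n) else 0
  | _ => 0
  end.

Lemma nrounds_split l : (l <= n)%nat ->
  nrounds l = (typed_rounds 0 l + typed_rounds 1 l + typed_rounds 2 l + typed_rounds 3 l)%nat.
Proof.
  intros Hl. unfold typed_rounds. destruct (Nat.ltb_spec l n).
  - unfold nrounds. replace (n - l)%nat with (S (n - S l)) by lia. simpl.
    replace (n - S (n - S l))%nat with l by lia. lia.
  - replace l with n by lia. rewrite Nat.eqb_refl. simpl. unfold nrounds. rewrite Nat.sub_diag. reflexivity.
Qed.

Lemma typed_rounds_lt l : (l < n)%nat ->
  typed_rounds 0 l = nrounds (S l) /\ typed_rounds 1 l = (level_val l * nrounds (S l))%nat /\
  typed_rounds 2 l = level_val l /\ typed_rounds 3 l = O.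
Proof. intros H. unfold typed_rounds. destruct (Nat.ltb_spec l n); [|lia]. auto. Qed.

Lemma typed_rounds_last :
  typed_rounds 0 n = O /\ typed_rounds 1 n = O /\ typed_rounds 2 n = O /\ typed_rounds 3 n = B.
Proof. unfold typed_rounds. destruct (Nat.ltb_spec n n); [lia|]. rewrite Nat.eqb_refl. auto. Qed.

Lemma typed_rounds_above l r : (n < l)%nat -> typed_rounds r l = O.
Proof.
  intros H. unfold typed_rounds. destruct (Nat.ltb_spec l n); [lia|].
  destruct (Nat.eqb_spec l n); [lia|]. auto.
Qed.

Lemma fill_amount_in l : (1 <= l <= n)%nat ->
  Z.of_nat (fill_amount l) = Z.of_nat (level_val l) - Z.of_nat (level_val (l - 1)).
Proof.
  intros H. unfold fill_amount. destruct (Nat.leb_spec 1 l); [|lia]. destruct (Nat.leb_spec l n); [|lia].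
  destruct l as [|l]; [lia|]. pose proof (level_val_le_S l). rewrite Nat.sub_succ, Nat.sub_0_r. simpl. lia.
Qed.

Lemma fill_amount_above l : (n < l)%nat -> fill_amount l = O.
Proof. intros H. unfold fill_amount. destruct (Nat.leb_spec l n); [lia|]. rewrite Bool.andb_false_r. reflexivity. Qed.

Lemma run_tally_back l : (l <= n)%nat ->
  run_tally 0 l = Z.of_nat (level_val l) * Z.of_nat (nrounds l).
Proof. intros H. unfold run_tally. destruct (Nat.leb_spec l n); lia. Qed.

Lemma run_tally_back_above l : (n < l)%nat -> run_tally 0 l = 0.
Proof. intros H. unfold run_tally. destruct (Nat.leb_spec l n); lia. Qed.

Lemma run_tally_balanced l m : (l <= S n)%nat -> (m < 7)%nat -> zcounter run_tally l m = 0.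
Proof.
  intros Hl Hm. pose proof level_val_S as VS. pose proof level_val_0 as V0.
  unfold zcounter, rounds, transfers, rounds_due, transfers_due, type2_due, at_last.
  destruct l as [|l].
  - pose proof (nrounds_split 0 ltac:(lia)) as R0. rewrite run_tally_back by lia.
    simpl run_tally. unfold Az.
    destruct (Nat.eqb_spec 0 n) as [Hn|Hn].
    + destruct typed_rounds_last as [M0 [M1 [M2 M3]]]. rewrite <- Hn in M0, M1, M2, M3.
      rewrite M0, M1, M2, M3 in *.
      destruct m as [|[|[|[|[|[|[|m]]]]]]]; try lia; rewrite <- Hn, V0; nia.
    + destruct (typed_rounds_lt 0 ltac:(lia)) as [M0 [M1 [M2 M3]]]. rewrite M3 in *.
      destruct m as [|[|[|[|[|[|[|m]]]]]]]; lia.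
  - destruct (Nat.lt_ge_cases l n) as [Hlt|Hge].
    + destruct (typed_rounds_lt l Hlt) as [M0 [M1 [M2 M3]]].
      pose proof (nrounds_split (S l) ltac:(lia)) as RS.
      rewrite run_tally_back by lia. simpl run_tally. rewrite fill_amount_in by lia.
      rewrite Nat.sub_succ, Nat.sub_0_r.
      destruct (Nat.eqb_spec (S l) n) as [Hn|Hn].
      * destruct typed_rounds_last as [N0 [N1 [N2 N3]]]. rewrite <- Hn in N0, N1, N2, N3.
        rewrite M0, M1, M2, N0, N1, N2, N3 in *. rewrite VS in *.
        destruct m as [|[|[|[|[|[|[|m]]]]]]]; try lia; rewrite <- Hn, ?VS; nia.
      * destruct (typed_rounds_lt (S l) ltac:(lia)) as [N0 [N1 [N2 N3]]].
        rewrite M0, M1, M2, N2, N3 in *. rewrite VS in *.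
        destruct m as [|[|[|[|[|[|[|m]]]]]]]; lia.
    + assert (l = n) by lia. subst l.
      destruct typed_rounds_last as [M0 [M1 [M2 M3]]].
      rewrite run_tally_back_above by lia. simpl run_tally. rewrite fill_amount_above by lia.
      rewrite ?M0, ?M1, ?M2, ?M3, !(typed_rounds_above (S n)) by lia.
      destruct (Nat.eqb_spec (S n) n); [lia|].
      destruct m as [|[|[|[|[|[|[|m]]]]]]]; lia.
Qed.


Definition run_tally_below (i k l : nat) : Z :=
  if Nat.leb k 9 then (if Nat.ltb l i then run_tally k l else 0)
  else if (Nat.eqb k 10 || Nat.eqb k 11)%bool then run_tally k l else 0.

Lemma run_tally_below_S i : (i <= n)%nat ->
  add_rounds (add_rounds (add_rounds (add_rounds
    (tally_addn (run_tally_below i) 9 i (fill_amount i))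
      i 0 (level_val i) (typed_rounds 0 i)) i 1 (level_val i) (typed_rounds 1 i))
      i 2 (level_val i) (typed_rounds 2 i)) i 3 (level_val i) (typed_rounds 3 i)
  = run_tally_below (S i).
Proof.
  intros Hi. extensionality k. extensionality l. unfold run_tally_below, add_rounds, tally_addn.
  destruct (Nat.eqb_spec l i) as [->|Hne].
  - rewrite ?Nat.eqb_refl. destruct (Nat.ltb_spec i i); [lia|]. destruct (Nat.ltb_spec i (S i)); [|lia].
    rewrite !Bool.andb_true_r. pose proof (nrounds_split i Hi).
    destruct k as [|[|[|[|[|[|[|[|[|[|k]]]]]]]]]]; simpl Nat.eqb; simpl Nat.leb; cbv iota beta;
      rewrite ?run_tally_back by auto; simpl run_tally; lia.
  - rewrite ?Bool.andb_false_r.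
    destruct (Nat.leb k 9); [|destruct (_ || _)%bool; lia].
    destruct (Nat.ltb_spec l i); destruct (Nat.ltb_spec l (S i)); lia.
Qed.

Lemma reach_level i : (i <= n)%nat ->
  reach 2 pow_vass
    (cfg (state i 0) (tally_addn (run_tally_below i) 9 i (fill_amount i)) (Z.of_nat (level_val i)) 0)
    (cfg (state i 0) (run_tally_below (S i)) (Z.of_nat (level_val i)) 0).
Proof.
  intros Hi. rewrite <- run_tally_below_S by auto.
  eapply rt_trans; [apply (reach_rounds _ i 0); auto; lia|].
  eapply rt_trans; [apply (reach_rounds _ i 1); auto; lia|].
  eapply rt_trans; [apply (reach_rounds _ i 2); auto; lia|].
  apply (reach_rounds _ i 3); auto; lia.
Qed.

Lemma reach_fill i : (i < n)%nat ->
  reach 2 pow_vass (cfg (state i 0) (run_tally_below (S i)) (Z.of_nat (level_val i)) 0)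
    (cfg (state (S i) 0) (tally_addn (run_tally_below (S i)) 9 (S i) (fill_amount (S i)))
       (Z.of_nat (level_val (S i))) 0).
Proof.
  intros Hi. pose proof (fill_amount_in (S i) ltac:(lia)) as Hf.
  rewrite Nat.sub_succ, Nat.sub_0_r in Hf.
  assert (I1 : In (Edge (state (S i - 1) 0) 15 0 0 0 (state (S i) 6)) edges)
    by (eapply fill_edges_in; [|left; reflexivity]; lia).
  assert (I2 : In (Edge (state (S i) 6) 9 (S i) 1 0 (state (S i) 6)) edges)
    by (eapply fill_edges_in; [|right; left; reflexivity]; lia).
  assert (I3 : In (Edge (state (S i) 6) 15 0 0 0 (state (S i) 0)) edges)
    by (eapply fill_edges_in; [|right; right; left; reflexivity]; lia).
  set (G := tally_addn (run_tally_below (S i)) 9 (S i) (fill_amount (S i))).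
  replace (state i 0) with (state (S i - 1) 0) by (f_equal; lia).
  apply rt_trans with (cfg (state (S i) 6) (run_tally_below (S i)) (Z.of_nat (level_val i)) 0).
  { apply (reach_silent (Edge (state (S i - 1) 0) 15 0 0 0 (state (S i) 6))); auto; lia. }
  apply rt_trans with (cfg (state (S i) 6) G (Z.of_nat (level_val (S i))) 0).
  { apply (reach_loop (Edge (state (S i) 6) 9 (S i) 1 0 (state (S i) 6)) _ _ _ _ _ _ (fill_amount (S i)));
      auto; cbn; lia. }
  apply (reach_silent (Edge (state (S i) 6) 15 0 0 0 (state (S i) 0))); auto; lia.
Qed.

Lemma reach_levels i : (i <= n)%nat ->
  reach 2 pow_vass (cfg (state 0 0) (run_tally_below 0) (Z.of_nat (level_val 0)) 0)
    (cfg (state i 0) (run_tally_below (S i)) (Z.of_nat (level_val i)) 0).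
Proof.
  induction i as [|i IH]; intros Hi.
  - pose proof (reach_level 0 Hi) as L. unfold fill_amount in L. simpl in L.
    rewrite tally_addn_0 in L. exact L.
  - eapply rt_trans; [apply IH; lia|]. eapply rt_trans; [apply reach_fill; lia|]. apply reach_level; auto.
Qed.

Lemma reach_begin : reach 2 pow_vass (cfg 0 tally_zero 0 0)
  (cfg (state 0 0) (run_tally_below 0) (Z.of_nat (level_val 0)) 0).
Proof.
  assert (I1 : In (Edge 0 10 0 Az 0 (state 0 0)) edges) by (apply outer_edges_in; left; reflexivity).
  assert (I2 : In (Edge (state 0 0) 11 0 0 0 (state 0 0)) edges)
    by (apply outer_edges_in; right; left; reflexivity).
  set (G1 := tally_addn tally_zero 10 0 1).
  assert (HG : run_tally_below 0 = tally_addn G1 11 0 (nrounds 0)).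
  { extensionality k. extensionality l. unfold run_tally_below, G1, tally_addn, tally_zero.
    destruct (Nat.ltb_spec l 0); [lia|].
    destruct k as [|[|[|[|[|[|[|[|[|[|[|[|k]]]]]]]]]]]]; simpl Nat.leb; simpl Nat.eqb; cbv iota beta; try lia.
    all: simpl run_tally; destruct (Nat.eqb_spec l 0); simpl; lia. }
  rewrite HG, level_val_0.
  apply rt_trans with (cfg (state 0 0) G1 Az 0).
  { apply (reach_fire (Edge 0 10 0 Az 0 (state 0 0))); auto; cbn; unfold Az; lia. }
  apply (reach_loop (Edge (state 0 0) 11 0 0 0 (state 0 0)) _ _ _ _ _ _ (nrounds 0)); auto; cbn; unfold Az; lia.
Qed.

Lemma reach_end : reach 2 pow_vass (cfg (state n 0) (run_tally_below (S n)) (Z.of_nat (level_val n)) 0)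
  (cfg 1 run_tally (Z.of_nat (level_val n)) (Z.of_nat B)).
Proof.
  assert (I1 : In (Edge (state n 0) 15 0 0 0 1) edges) by (apply outer_edges_in; do 2 right; left; reflexivity).
  assert (I2 : In (Edge 1 12 0 0 1 1) edges) by (apply outer_edges_in; do 3 right; left; reflexivity).
  assert (I3 : In (Edge 1 13 0 0 0 1) edges) by (apply outer_edges_in; do 4 right; left; reflexivity).
  assert (I4 : In (Edge 1 14 0 0 0 1) edges) by (apply outer_edges_in; do 5 right; left; reflexivity).
  set (c := level_val n). set (G1 := tally_addn (run_tally_below (S n)) 12 0 B).
  set (G2 := tally_addn G1 13 0 (B * c)).
  assert (HG : run_tally = tally_addn G2 14 0 c).
  { extensionality k. extensionality l. unfold G2, G1, c, run_tally_below, tally_addn.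
    destruct k as [|[|[|[|[|[|[|[|[|[|[|[|[|[|[|k]]]]]]]]]]]]]]]; simpl Nat.leb; simpl Nat.eqb;
      rewrite ?Bool.andb_false_l, ?Bool.andb_true_l; cbv iota beta;
      try (destruct (Nat.ltb_spec l (S n)); [lia|]); rewrite ?run_tally_back_above by lia;
      simpl run_tally; rewrite ?typed_rounds_above, ?fill_amount_above by lia;
      try destruct (Nat.eqb_spec l 0); simpl; lia. }
  rewrite HG.
  apply rt_trans with (cfg 1 (run_tally_below (S n)) (Z.of_nat c) 0).
  { apply (reach_silent (Edge (state n 0) 15 0 0 0 1)); auto; lia. }
  apply rt_trans with (cfg 1 G1 (Z.of_nat c) (Z.of_nat B)).
  { apply (reach_loop (Edge 1 12 0 0 1 1) _ _ _ _ _ _ B); auto; cbn; lia. }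
  apply rt_trans with (cfg 1 G2 (Z.of_nat c) (Z.of_nat B)).
  { apply (reach_loop (Edge 1 13 0 0 0 1) _ _ _ _ _ _ (B * c)); auto; cbn; lia. }
  apply (reach_loop (Edge 1 14 0 0 0 1) _ _ _ _ _ _ c); auto; cbn; lia.
Qed.

Lemma counters_final : counters (Z.of_nat (level_val n)) (Z.of_nat B) run_tally =
  [Z.of_nat (level_val n); Z.of_nat B; Z.of_nat B * Z.of_nat (level_val n)] ++ zeros (dim - 3).
Proof.
  apply nth_ext with (d := 0) (d' := 0).
  - rewrite counters_length, length_app. unfold zeros. rewrite repeat_length. cbn [length]. unfold dim. lia.
  - intros j Hj. rewrite counters_length in Hj. rewrite counters_nth by auto.
    destruct j as [|[|[|j]]]; try reflexivity. cbn [nth app]. unfold zeros. rewrite nth_repeat.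
    replace (S (S (S j))) with (3 + 7 * (j / 7) + j mod 7)%nat by (pose proof (Nat.div_mod_eq j 7); lia).
    assert (Hm : (j mod 7 < 7)%nat) by (apply Nat.mod_upper_bound; lia).
    rewrite layout_zcounter by auto. apply run_tally_balanced; auto.
    unfold dim in Hj. apply Nat.lt_succ_r, Nat.Div0.div_lt_upper_bound. lia.
Qed.

Lemma reach_target : reach 2 pow_vass (0%nat, zeros dim)
  (1%nat, [Z.of_nat (level_val n); Z.of_nat B; Z.of_nat B * Z.of_nat (level_val n)] ++ zeros (dim - 3)).
Proof.
  rewrite <- counters_zero, <- counters_final. fold (cfg 0 tally_zero 0 0).
  fold (cfg 1 run_tally (Z.of_nat (level_val n)) (Z.of_nat B)).
  eapply rt_trans; [apply reach_begin|]. eapply rt_trans; [apply (reach_levels n); lia|]. apply reach_end.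
Qed.

End Run.

(** * Size *)

Lemma edge_bounds e : In e edges ->
  (src e < 9 + 7 * n)%nat /\ (tgt e < 9 + 7 * n)%nat /\ Z.abs (dx0 e) <= Az + 1 /\ Z.abs (dx1 e) <= 1.
Proof.
  intros He. assert (0 <= Az) by (unfold Az; lia). apply in_edges in He.
  destruct He as [E|[E|[E|[E|[E|[E|[[i [r [Hi [Hr [E|[E|E]]]]]]|[[i [Hi [E|E]]]|[i [Hi [E|[E|E]]]]]]]]]]]];
    subst e; cbn [src tgt dx0 dx1]; unfold state; lia.
Qed.

Lemma edges_length : length edges = (6 + 14 * (n + 1) + 3 * n)%nat.
Proof.
  unfold edges. rewrite !length_app.
  rewrite (flat_map_constant_length (c := 14%nat)), (flat_map_constant_length (c := 3%nat)) by reflexivity.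
  rewrite !length_seq. cbn [length outer_edges]. lia.
Qed.

Lemma pow_vass_wf : wf_VASS 2 (dim - 2) pow_vass.
Proof.
  intros p v q Hin. apply in_map_iff in Hin. destruct Hin as [e [He Hin]].
  injection He as <- <- <-. destruct (edge_bounds e Hin) as [Hs [Ht _]].
  cbn [nstates pow_vass]. rewrite counters_length. unfold dim. lia.
Qed.

Definition size_const : nat := 9 + 340 * (2 * A + 10).

Lemma pow_vass_size : (vass_size pow_vass <= size_const * (n + 1) ^ size_const)%nat.
Proof.
  unfold vass_size. cbn [nstates trans pow_vass].
  assert (Hsum : (fold_right (fun t acc => (norm1 (snd (fst t)) + acc)%nat) 0%nat (map edge_trans edges)
                  <= length (map edge_trans edges) * (dim * (2 * A + 10)))%nat).
  { apply sum_norm1_le. intros t Ht. apply in_map_iff in Ht. destruct Ht as [e [<- He]].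
    destruct (edge_bounds e He) as [_ [_ [B0 B1]]]. cbn [fst snd edge_trans]. unfold counters.
    eapply Nat.le_trans; [apply norm1_map_le with (B := (2 * A + 10)%nat)|rewrite length_seq; lia].
    intros j. pose proof (layout_unit_bound _ _ (kind e) (level e) j B0 B1). unfold Az in *. lia. }
  rewrite length_map, edges_length in Hsum.
  assert (Hpow : ((n + 1) ^ 2 <= (n + 1) ^ size_const)%nat)
    by (apply Nat.pow_le_mono_r; unfold size_const; lia).
  enough (9 + 7 * n + (6 + 14 * (n + 1) + 3 * n) * (dim * (2 * A + 10)) <= size_const * (n + 1) ^ 2)%nat by nia.
  unfold dim, size_const. rewrite Nat.pow_2_r. nia.
Qed.

End Construction.

Theorem lemma12 (A : nat) :
  exists (k : nat -> nat) (V : nat -> VASS) (c : nat),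
    (forall n, (vass_size (V n) <= c * (n + 1) ^ c)%nat) /\
    forall n, wf_VASS 2 (k n) (V n) /\
      computes 2 (k n) 3 (V n) (target_set (Z.of_nat (A ^ (2 ^ n))%nat)).
Proof.
  exists (fun n => (dim n - 2)%nat), (pow_vass A), (size_const A).
  split; [intros n; apply pow_vass_size|].
  intros n. split; [apply pow_vass_wf|].
  split; [unfold dim; lia|]. split; [intros v [B ->]; reflexivity|].
  exists 0%nat, 1%nat. split; [cbn; lia|]. split; [cbn; lia|].
  intros v Hv. replace (2 + (dim n - 2))%nat with (dim n) by (unfold dim; lia).
  split.
  - intros [B ->]. apply (reach_target A n B).
  - intros R. apply good_cfg_final; auto. eapply good_cfg_reach; [exact R|]. apply good_cfg_init.
Qed.
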